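(* Let $K=\operatorname{cone}\{e_1,\dots,e_m\}\subset\mathbb{R}^m$ be a simplicial cone and $L$ a proper cone such that $K$ is an $L$-isotone projection set. Then there exists an index set $I\subset\{1,\dots,m\}$, with complement $I^c$, such that $\langle e_i,e_j\rangle\ge0$ for all $i,j\in I$, $\langle e_k,e_\ell\rangle\ge0$ for all $k,\ell\in I^c$, and $\langle e_i,e_k\rangle\le0$ for all $i\in I$, $k\in I^c$.
   Context: $\mathbb{R}^m$ carries the standard inner product. A simplicial cone is $\operatorname{cone}\{e_1,\dots,e_m\}=\{\sum t^ie_i:t^i\ge0\}$ with $e_1,\dots,e_m$ linearly independent. A proper cone is a closed convex cone $L$ that is pointed ($L\cap(-L)=\{0\}$) and generating ($L-L=\mathbb{R}^m$). $x\le_L y$ means $y-x\in L$. $K$ is an $L$-isotone projection set if $x\le_L y$ implies $P_Kx\le_L P_Ky$, where $P_K$ is the metric projection onto $K$. *)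

From HB Require Import structures.
From mathcomp Require Import all_boot all_order all_algebra.
From mathcomp Require Import reals.
Set Implicit Arguments. Unset Strict Implicit. Unset Printing Implicit Defensive.
Import Order.TTheory GRing.Theory Num.Theory.
Local Open Scope ring_scope.

Section Defs.
Variables (R : realType) (m : nat).
Notation vec := 'rV[R]_m.

Definition dot (x y : vec) : R := \sum_(i < m) x ord0 i * y ord0 i.

Definition dist2 (x y : vec) : R := dot (x - y) (x - y).

Definition lin_indep (e : 'I_m -> vec) : Prop :=
  forall t : 'I_m -> R, \sum_(i < m) t i *: e i = 0 -> forall i, t i = 0.

Definition cone_gen (e : 'I_m -> vec) : vec -> Prop :=
  fun x => exists t : 'I_m -> R, (forall i, 0 <= t i) /\ x = \sum_(i < m) t i *: e i.

Definition closed_set (L : vec -> Prop) : Prop :=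
  forall x, (forall eps : R, 0 < eps -> exists y, L y /\ dist2 x y < eps) -> L x.

Definition convex_cone (L : vec -> Prop) : Prop :=
  [/\ L 0,
      forall x y, L x -> L y -> L (x + y) &
      forall (t : R) x, 0 <= t -> L x -> L (t *: x)].

Definition pointed (L : vec -> Prop) : Prop :=
  forall x, L x -> L (- x) -> x = 0.

Definition generating (L : vec -> Prop) : Prop :=
  forall z, exists x y, [/\ L x, L y & z = x - y].

Definition proper_cone (L : vec -> Prop) : Prop :=
  [/\ closed_set L, convex_cone L, pointed L & generating L].

Definition leL (L : vec -> Prop) (x y : vec) : Prop := L (y - x).

Definition is_proj (K : vec -> Prop) (x p : vec) : Prop :=
  K p /\ forall y, K y -> dist2 x p <= dist2 x y.

Definition isotone_projection_set (L K : vec -> Prop) : Prop :=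
  forall x y p q, leL L x y -> is_proj K x p -> is_proj K y q -> leL L p q.

End Defs.

From HB Require Import structures.
From mathcomp Require Import all_boot all_order all_algebra.
From mathcomp Require Import reals boolp.
From mathcomp Require Import lra.
Set Implicit Arguments. Unset Strict Implicit. Unset Printing Implicit Defensive.
Import Order.TTheory GRing.Theory Num.Theory.
Local Open Scope ring_scope.

(* If [u] is orthogonal to [e_k] and makes a nonpositive inner product with
   every generator, the projection of [a e_k + u] onto [K] is [a e_k].  Given
   [v] in [L], choose (by linear independence) such a [w] that also absorbs the
   part of [v] orthogonal to [e_k]; then, for [a] large enough,
   [a e_k + w <=_L a e_k + w + v] and the two projections differ by the component [c e_k] of [v] along [e_k], so
   isotonicity puts [c e_k] in [L].  As [L] is generating, some element of [L]
   has a nonzero such component, hence each [e_k] lies in [L] or in [-L]; take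
   [I] to be the indices with [e_k] in [L].  A wrong sign of some [<e_i, e_k>]
   would then put [e_k] in the other half, contradicting pointedness or the
   choice of [I]. *)

Section InnerProduct.
Variables (R : realType) (m : nat).
Notation vec := 'rV[R]_m.

Lemma dotC (x y : vec) : dot x y = dot y x.
Proof. by apply: eq_bigr => i _; rewrite mulrC. Qed.

Lemma dotDl (x y z : vec) : dot (x + y) z = dot x z + dot y z.
Proof. by rewrite /dot -big_split /=; apply: eq_bigr => i _; rewrite !mxE mulrDl. Qed.

Lemma dotZl a (x z : vec) : dot (a *: x) z = a * dot x z.
Proof. by rewrite /dot mulr_sumr; apply: eq_bigr => i _; rewrite !mxE mulrA. Qed.

Lemma dotNl (x z : vec) : dot (- x) z = - dot x z.
Proof. by rewrite -scaleN1r dotZl mulN1r. Qed.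

Lemma dotBl (x y z : vec) : dot (x - y) z = dot x z - dot y z.
Proof. by rewrite dotDl dotNl. Qed.

Lemma dot0l (z : vec) : dot 0 z = 0.
Proof. by rewrite -(scale0r 0) dotZl mul0r. Qed.

Lemma dot_suml (t : 'I_m -> R) (f : 'I_m -> vec) z :
  dot (\sum_(i < m) t i *: f i) z = \sum_(i < m) t i * dot (f i) z.
Proof.
rewrite (big_morph (fun x => dot x z) (fun x y => dotDl x y z) (dot0l z)).
by apply: eq_bigr => i _; rewrite dotZl.
Qed.

Lemma dot_ge0 (x : vec) : 0 <= dot x x.
Proof. by apply: sumr_ge0 => i _; rewrite -expr2 sqr_ge0. Qed.

Lemma dot_eq0 (x : vec) : dot x x = 0 -> x = 0.
Proof.
move=> /eqP; rewrite psumr_eq0 => [/allP x0|i _]; last by rewrite -expr2 sqr_ge0.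
apply/rowP => j; rewrite mxE.
by have := x0 j (mem_index_enum j); rewrite -expr2 sqrf_eq0 => /eqP.
Qed.

End InnerProduct.

Section SimplicialCone.
Variables (R : realType) (m : nat) (e : 'I_m -> 'rV[R]_m).

Lemma is_proj_cone_gen_ray k a u :
  0 <= a -> dot u (e k) = 0 -> (forall i, dot u (e i) <= 0) ->
  is_proj (cone_gen e) (a *: e k + u) (a *: e k).
Proof.
move=> a_ge0 u_k u_le0; split.
  exists (fun i => if i == k then a else 0); split; first by move=> i; case: eqP.
  by rewrite (bigD1 k) //= eqxx big1 ?addr0 // => i /negbTE ->; rewrite scale0r.
move=> _ [t [t_ge0 ->]]; rewrite /dist2 addrC addKr.
set d := a *: e k - \sum_(i < m) t i *: e i.
have -> : a *: e k + u - \sum_(i < m) t i *: e i = u + d by rewrite addrAC addrC addrA.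
(* Pythagoras: [|u + d|^2 = |u|^2 + 2 <d, u> + |d|^2] with [<d, u> >= 0]. *)
have du_ge0 : 0 <= dot d u.
  rewrite dotBl dotZl dot_suml dotC u_k mulr0 sub0r oppr_ge0.
  by apply: sumr_le0 => i _; rewrite dotC mulr_ge0_le0.
have := dot_ge0 d; clearbody d.
by rewrite dotDl ![dot _ (u + d)]dotC !dotDl (dotC u d); lra.
Qed.

Hypothesis e_indep : lin_indep e.

Lemma lin_indep_dual (b : 'I_m -> R) : exists w, forall i, dot w (e i) = b i.
Proof.
pose E : 'M[R]_m := \matrix_(i, j) e i ord0 j.
have E_free : row_free E.
  apply: inj_row_free => v vE; apply/rowP => i; rewrite mxE.
  apply: e_indep i; apply/rowP => j; move/rowP/(_ j): vE; rewrite !mxE => vE_j.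
  by rewrite summxE -[RHS]vE_j; apply: eq_bigr => i _; rewrite !mxE.
have ET_unit : E^T \in unitmx by rewrite unitmx_tr -row_free_unit.
pose bv := \row_i b i; exists (bv *m invmx E^T) => i.
transitivity (bv ord0 i); last by rewrite mxE.
rewrite -{2}(mulmxKV ET_unit bv) mxE.
by apply: eq_bigr => j _; rewrite !mxE.
Qed.

Lemma lin_indep_neq0 k : e k != 0.
Proof.
apply/eqP => ek0.
have sum0 : \sum_(i < m) (if i == k then 1 else 0) *: e i = 0.
  rewrite (bigD1 k) //= ek0 scaler0 add0r big1 // => i /negbTE ->.
  by rewrite scale0r.
by have := e_indep sum0 k; rewrite eqxx; apply/eqP/oner_neq0.
Qed.

Lemma dot_gen_gt0 k : 0 < dot (e k) (e k).
Proof.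
rewrite lt_def dot_ge0 andbT; apply/eqP => /dot_eq0/eqP.
exact/negP/lin_indep_neq0.
Qed.

Variable L : 'rV[R]_m -> Prop.
Hypothesis isoL : isotone_projection_set L (cone_gen e).

Lemma isotone_component_in_cone k v :
  L v -> L ((dot v (e k) / dot (e k) (e k)) *: e k).
Proof.
move=> Lv; set c := _ / _.
set vp := v - c *: e k.
have vp_k : dot vp (e k) = 0.
  by rewrite dotBl dotZl mulfVK ?subrr ?gt_eqF ?dot_gen_gt0.
have [w w_dual] := lin_indep_dual (fun i => - `|dot vp (e i)|).
have w_k : dot w (e k) = 0 by rewrite w_dual vp_k normr0 oppr0.
have P0 : is_proj (cone_gen e) (`|c| *: e k + w) (`|c| *: e k).
  by apply: is_proj_cone_gen_ray => // i; rewrite w_dual oppr_le0.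
have P1 : is_proj (cone_gen e) ((`|c| + c) *: e k + (w + vp))
                                ((`|c| + c) *: e k).
  apply: is_proj_cone_gen_ray.
  - by rewrite -lerBlDr sub0r -normrN ler_norm.
  - by rewrite dotDl w_k vp_k addr0.
  - by move=> i; rewrite dotDl w_dual addrC subr_le0 ler_norm.
have shift : (`|c| + c) *: e k + (w + vp) = `|c| *: e k + w + v.
  by rewrite scalerDl addrACA [c *: e k + _]addrC subrK.
rewrite shift in P1; have := isoL _ P0 P1.
by rewrite /leL addrC addKr scalerDl addrC addKr; apply.
Qed.

Hypothesis coneL : convex_cone L.

Lemma convex_cone_scale_pos c x : 0 < c -> L (c *: x) -> L x.
Proof.
case: coneL => _ _ coneZ c_gt0 /(coneZ c^-1); rewrite scalerA mulVf ?gt_eqF //.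
by rewrite scale1r invr_ge0; apply; apply: ltW.
Qed.

Lemma isotone_gen_pos k v : L v -> 0 < dot v (e k) -> L (e k).
Proof.
move=> /(isotone_component_in_cone k) Lc v_k.
by apply: convex_cone_scale_pos Lc; rewrite divr_gt0 ?dot_gen_gt0.
Qed.

Lemma isotone_gen_neg k v : L v -> dot v (e k) < 0 -> L (- e k).
Proof.
move=> /(isotone_component_in_cone k) Lc v_k.
apply: (@convex_cone_scale_pos (- (dot v (e k) / dot (e k) (e k)))).
  by rewrite oppr_gt0 pmulr_llt0 ?invr_gt0 ?dot_gen_gt0.
by rewrite scaleNr -scalerN opprK.
Qed.

Hypothesis genL : generating L.

Lemma isotone_gen_dichotomy k : L (e k) \/ L (- e k).
Proof.
have [x [y [Lx Ly exy]]] := genL (e k).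
have : 0 < dot x (e k) - dot y (e k) by rewrite -dotBl -exy dot_gen_gt0.
case: (ltP 0 (dot x (e k))) => [x_k _|x_k yx_k].
  by left; apply: isotone_gen_pos Lx x_k.
by right; apply: isotone_gen_neg Ly _; lra.
Qed.

End SimplicialCone.

Theorem proposition3 (R : realType) (m : nat) (e : 'I_m -> 'rV[R]_m)
    (L : 'rV[R]_m -> Prop) :
  lin_indep e -> proper_cone L ->
  isotone_projection_set L (cone_gen e) ->
  exists I : {set 'I_m},
    [/\ forall i j, i \in I -> j \in I -> 0 <= dot (e i) (e j),
        forall k l, k \notin I -> l \notin I -> 0 <= dot (e k) (e l) &
        forall i k, i \in I -> k \notin I -> dot (e i) (e k) <= 0].
Proof.
move=> e_indep [_ coneL pointedL genL] isoL.
have pos := isotone_gen_pos e_indep isoL coneL.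
have neg := isotone_gen_neg e_indep isoL coneL.
exists [set k | `[< L (e k) >]].
have inI k : reflect (L (e k)) (k \in [set k | `[< L (e k) >]]).
  by rewrite inE; apply: asboolP.
have notI k : k \notin [set k | `[< L (e k) >]] -> L (- e k).
  by move/inI; case: (isotone_gen_dichotomy e_indep isoL coneL genL k).
split=> [i j /inI Li /inI Lj|k l /notI Lnk /inI Ll|i k /inI Li /inI Lk];
  rewrite leNgt; apply/negP => e_ik.
- by move/eqP: (pointedL _ Lj (neg j _ Li e_ik)); apply/negP/lin_indep_neq0.
- by apply/Ll/(pos l _ Lnk); rewrite dotNl oppr_gt0.
- exact/Lk/(pos k _ Li).
Qed.
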